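(* Let $G=(V,E)$ be a finite, undirected, unweighted, connected graph with $n=|V|$ vertices. If $P$ is a shortest walk in $G$ visiting every vertex at least once, then $n\le \mathrm{len}(P)\le 0.5n^2+0.5n$. If $C$ is a shortest closed walk in $G$ visiting every vertex at least once, then $n\le\mathrm{len}(C)\le 0.5n^2+1.5n-1$.
   Context: A walk in $G$ is a sequence $(u_1,\dots,u_h)$ of vertices with $\{u_t,u_{t+1}\}\in E$ for all $t$ (repetitions allowed), and its length is $\mathrm{len}(u_1,\dots,u_h)=h$, the number of entries counted with multiplicity. A closed walk is a walk with $u_1=u_h$. A shortest walk (resp. closed walk) visiting every vertex is one of minimum length among all walks (resp. closed walks) whose set of entries is $V$. *)

(* A finite simple undirected graph on the vertex type T
   is an irreflexive symmetric relation e : rel T. *)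
From mathcomp Require Import all_boot.
Set Implicit Arguments. Unset Strict Implicit. Unset Printing Implicit Defensive.

(* A walk (u_1,...,u_h) is represented as the nonempty sequence x :: s
   with x = u_1; it is a walk iff path e x s. *)
Definition walk_seq (T : eqType) (x : T) (s : seq T) : seq T := x :: s.

Definition len (T : eqType) (x : T) (s : seq T) : nat := size (walk_seq x s).

Definition is_walk (T : eqType) (e : rel T) (x : T) (s : seq T) : Prop :=
  path e x s.

Definition is_closed_walk (T : eqType) (e : rel T) (x : T) (s : seq T) : Prop :=
  path e x s /\ last x s = x.

Definition visits_all (T : finType) (x : T) (s : seq T) : Prop :=
  forall v : T, v \in walk_seq x s.

Definition shortest_covering_walk (T : finType) (e : rel T) (x : T) (s : seq T) : Prop :=
  is_walk e x s /\ visits_all x s /\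
  forall (y : T) (t : seq T), is_walk e y t -> visits_all y t -> len x s <= len y t.

Definition shortest_covering_closed_walk (T : finType) (e : rel T) (x : T) (s : seq T) : Prop :=
  is_closed_walk e x s /\ visits_all x s /\
  forall (y : T) (t : seq T), is_closed_walk e y t -> visits_all y t -> len x s <= len y t.

Definition connected_graph (T : finType) (e : rel T) : Prop :=
  forall x y : T, connect e x y.

(* Lower bounds: a walk visiting all n vertices has at least n entries.
   Upper bounds: walk greedily from any vertex to a nearest unvisited one.
   Cutting a simple path at its first exit from the visited set A gives a
   path of at most #|A| steps, since the vertices before the exit are
   distinct and lie in A; summing over #|A| = 1, ..., n - 1 gives a covering
   walk of at most n(n-1)/2 steps, i.e. at most n(n-1)/2 + 1 entries.  A
   simple path back to the start adds at most n - 1 steps for the closed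
   walk. *)

From mathcomp Require Import all_boot.
From mathcomp Require Import zify.

Set Implicit Arguments.
Unset Strict Implicit.
Unset Printing Implicit Defensive.

Section CoveringWalks.
Variables (T : finType) (e : rel T).

Lemma connect_uniq_path (x y : T) : connect e x y ->
  exists2 p, path e x p & (last x p == y) && uniq (x :: p).
Proof.
case/connectP=> p e_p ->; case: (shortenP e_p) => q e_q q_uniq _.
by exists q; rewrite ?eqxx.
Qed.

Lemma size_uniq_leq_card (s : seq T) : uniq s -> size s <= #|T|.
Proof. by move/card_uniqP <-; apply: max_card. Qed.

Lemma visits_all_card_leq (x : T) (s : seq T) : visits_all x s -> #|T| <= len x s.
Proof.
move=> xs_all; apply: leq_trans (card_size _).
by apply/subset_leq_card/subsetP=> v _; apply: xs_all.
Qed.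

Lemma uniq_path_exit (A : {set T}) (x : T) (p : seq T) :
  path e x p -> uniq (x :: p) -> x \in A -> has [predC A] p ->
  exists2 q, path e x q & (last x q \notin A) && (size q <= #|A|).
Proof.
move=> e_p p_uniq xA p_exit.
case: (split_find p_exit) e_p p_uniq => y p1 p2 yNA p1A e_p p_uniq.
exists (rcons p1 y); first by move: e_p; rewrite cat_path => /andP[].
rewrite last_rcons size_rcons; apply/andP; split; first exact: yNA.
have x_p1_uniq : uniq (x :: p1).
  by move: p_uniq; rewrite cat_rcons -cat_cons cat_uniq => /andP[].
move/card_uniqP: x_p1_uniq => /= <-; apply/subset_leq_card/subsetP=> v.
rewrite inE => /predU1P[-> // | vp1].
by apply: contraNT p1A => vNA; apply/hasP; exists v.
Qed.

Hypothesis e_conn : connected_graph e.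

Lemma exit_path (A : {set T}) (x v : T) : x \in A -> v \notin A ->
  exists2 q, path e x q & (last x q \notin A) && (size q <= #|A|).
Proof.
move=> xA vNA; have [p e_p /andP[/eqP p_v p_uniq]] := connect_uniq_path (e_conn x v).
apply: (uniq_path_exit e_p p_uniq xA); apply/hasP; exists v => //.
move: (mem_last x p); rewrite p_v inE => /predU1P[vx | //].
by rewrite vx xA in vNA.
Qed.

Lemma walk_covering_setC (A : {set T}) (x : T) : x \in A ->
  exists t, [/\ path e x t, {subset [predC A] <= x :: t} &
    2 * size t + #|A| * #|A|.-1 <= #|T| * #|T|.-1].
Proof.
have [m] := ubnP #|~: A|; elim: m => // m IH in A x *.
move=> ltAm xA; have [v vNA | A_full] := pickP [predC A]; last first.
  have ->: A = setT by apply/setP=> v; move: (A_full v); rewrite !inE => /negbFE.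
  by exists [::]; split=> // [v | ]; rewrite ?inE ?cardsT.
have [p e_p /andP[yNA size_p]] := exit_path xA vNA.
set y := last x p in yNA.
have [|t [e_t t_cover size_t]] := IH (y |: A) y _ (setU11 y A).
  by move: ltAm (cardsC A) (cardsC (y |: A)); rewrite cardsU1 yNA; lia.
exists (p ++ t); split; first by rewrite cat_path e_p.
- move=> w wNA; rewrite -cat_cons mem_cat.
  have [-> | wy] := eqVneq w y; first by rewrite mem_last.
  have: w \in y :: t by apply: t_cover; rewrite !inE negb_or wy -topredE.
  by rewrite inE (negbTE wy) /= => ->; rewrite orbT.
- move: size_t; rewrite cardsU1 yNA size_cat /= => size_t.
  have: 0 < #|A| by apply/card_gt0P; exists x.
  case: #|A| size_p size_t => //= a; nia.
Qed.

Lemma covering_walk (x : T) :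
  exists t, [/\ is_walk e x t, visits_all x t & 2 * size t <= #|T| * #|T|.-1].
Proof.
have [t [e_t t_cover size_t]] := walk_covering_setC (set11 x).
exists t; split=> // [v | ]; last by move: size_t; rewrite cards1 muln0 addn0.
have [-> | vx] := eqVneq v x; first exact: mem_head.
by apply: t_cover; rewrite inE in_set1 vx.
Qed.

Lemma covering_closed_walk (x : T) :
  exists t, [/\ is_closed_walk e x t, visits_all x t &
    2 * size t <= #|T| * #|T|.-1 + 2 * #|T|.-1].
Proof.
have [t [e_t t_all size_t]] := covering_walk x.
have [q e_q /andP[/eqP q_x q_uniq]] := connect_uniq_path (e_conn (last x t) x).
exists (t ++ q); split.
- by rewrite /is_closed_walk cat_path e_t e_q last_cat q_x.
- by move=> v; move: (t_all v); rewrite /walk_seq -cat_cons mem_cat => ->.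
- move: (size_uniq_leq_card q_uniq) size_t; rewrite size_cat /=.
  by case: #|T| => //= n; nia.
Qed.

End CoveringWalks.

Theorem lemma3 (T : finType) (e : rel T)
  (e_sym : symmetric e) (e_irr : irreflexive e) (e_conn : connected_graph e) :
  (forall (x : T) (s : seq T), shortest_covering_walk e x s ->
     #|T| <= len x s /\ 2 * len x s <= #|T| ^ 2 + #|T|) /\
  (forall (x : T) (s : seq T), shortest_covering_closed_walk e x s ->
     #|T| <= len x s /\ 2 * len x s + 2 <= #|T| ^ 2 + 3 * #|T|).
Proof.
split=> x s [_ [s_all s_min]]; split; try exact: visits_all_card_leq.
all: have: 0 < #|T| by apply/card_gt0P; exists x.
- have [t [t_walk t_all size_t]] := covering_walk e_conn x.
  move: (s_min x t t_walk t_all) size_t; rewrite /len /walk_seq /=.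
  case: #|T| => //= n; nia.
- have [t [t_walk t_all size_t]] := covering_closed_walk e_conn x.
  move: (s_min x t t_walk t_all) size_t; rewrite /len /walk_seq /=.
  case: #|T| => //= n; nia.
Qed.
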